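(* For GCWN networks $M,M',N$ and any label $\delta$ (either $p:\alpha$ or $\tau$), if $M\xrightarrow{\delta}M'$ and $M\equiv N$, then there exists $N'$ such that $N\xrightarrow{\delta}N'$ and $M'\equiv N'$.
   Context: GCWN syntax. Fix a countable set ${\sf Loc}$ of locations, channel names $c,d,\dots$ with co-names $\overline{c}$, variables, values $v$ (not channels), expressions $e$, boolean expressions $b$, and an evaluation ${\sf eval}$ on variable-free expressions. A finite graph $G=(|G|,\frown_G)$ has a finite vertex set $|G|\subseteq{\sf Loc}$ and a symmetric irreflexive edge relation. For disjoint $G,H$ and $D\subseteq|G|\times|H|$, $G\oplus_D H$ has vertices $|G|\cup|H|$ and edges those of $G$, those of $H$ and (symmetrically) the pairs in $D$. Processes: $P::={\bf 0}\mid c(x).P\mid\overline{c}(e).P\mid P+Q\mid{\bf if}~b~{\bf then}~P~{\bf else}~Q\mid A(\vec v)$ with process constants defined by $A(\vec x)\stackrel{\rm def}{=}P$. Networks: $M::=G\langle\Phi\rangle\mid M\backslash c\mid M\oplus_D N$ with $\Phi:|G|\to$ processes; every network is of the form $G\langle\Phi\rangle\backslash I$, and for $M=G\langle\Phi\rangle\backslash I$, $N=H\langle\Psi\rangle\backslash J$ (disjoint locations, $I\cap J=\emptyset$), $M\oplus_D N=(G\oplus_D H)\langle\Phi\cup\Psi\rangle\backslash(I\cup J)$. Write $|M|=|G|$, $M(p)=\Phi(p)$, $\frown_M=\frown_G$, $M[p\mapsto Q]$ for replacing the process at $p$ by $Q$. Networks are data-closed. Structural congruence $\equiv$: least congruence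 with $P+{\bf 0}\equiv P$, $P+Q\equiv Q+P$, $P+(Q+R)\equiv(P+Q)+R$, conditionals equal to the branch selected by ${\sf eval}(b)$, $A(\vec v)\equiv P\{\vec v/\vec x\}$ for $A(\vec x)\stackrel{\rm def}{=}P$, $\alpha$-conversion of restricted channels, $M\backslash c\backslash d\equiv M\backslash d\backslash c$, $M\oplus_D N\equiv N\oplus_D M$, $(M\oplus_D N)\backslash c\equiv M\oplus_D(N\backslash c)$ if $c,\overline c$ not in $M$, and $G\langle\Phi\rangle\equiv G\langle\Psi\rangle$ if $\Phi(p)\equiv\Psi(p)$ for all $p$. Labelled transitions. Actions $\alpha::=cv\mid\overline{c}v$. Processes: $\overline{c}(e).P\xrightarrow{\overline{c}v}P$ if ${\sf eval}(e)=v$; $c(x).P\xrightarrow{cv}P\{v/x\}$; $P+Q$ does any transition of $P$ or of $Q$; ${\bf if}~b~{\bf then}~P~{\bf else}~Q$ does the transitions of $P$ if ${\sf eval}(b)=true$, of $Q$ if $false$; $A(\vec v)$ does the transitions of $P\{\vec v/\vec x\}$ where $A(\vec x)\stackrel{\rm def}{=}P$. Networks, labels $\delta::=p:\alpha\mid\tau$: (N-Send) if $p\in|M|$ and $M(p)\xrightarrow{\overline cv}P'$ then $M\xrightarrow{p:\overline cv}M[p\mapsto P']$; (N-Recv) if $p\in|M|$ and $M(p)\xrightarrow{cv}P'$ then $M\xrightarrow{p:cv}M[p\mapsto P']$; (N-Bcast) if $M\xrightarrow{p:\overline cv}M'$, $N\xrightarrow{q:cv}N'$ and $(p,q)\in D$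 then $M\oplus_D N\xrightarrow{p:\overline cv}M'\oplus_D N'$ and $N\oplus_D M\xrightarrow{p:\overline cv}N'\oplus_D M'$; (N-Res1) $M\xrightarrow{p:\overline cv}M'$ implies $M\backslash c\xrightarrow{\tau}M'\backslash c$; (N-Res2) $M\xrightarrow{\delta}M'$ with $c,\overline c$ not in $\delta$ implies $M\backslash c\xrightarrow{\delta}M'\backslash c$; (N-ParL/R) $M\xrightarrow{\delta}M'$ implies $M\oplus_D N\xrightarrow{\delta}M'\oplus_D N$, and $N\xrightarrow{\delta}N'$ implies $M\oplus_D N\xrightarrow{\delta}M\oplus_D N'$. *)

From HB Require Import structures.
From mathcomp Require Import all_boot finmap.

Set Implicit Arguments.
Unset Strict Implicit.
Unset Printing Implicit Defensive.

Local Open Scope fset_scope.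

Definition loc := nat.
Definition chan := nat.
Definition var := nat.
Definition val := nat.
Definition pconst := nat.

Inductive expr :=
| EVal (v : val) | EVar (x : var)
| EAdd (e1 e2 : expr) | ESub (e1 e2 : expr) | EMul (e1 e2 : expr).

Inductive bexp :=
| BTrue | BFalse
| BEq (e1 e2 : expr) | BLe (e1 e2 : expr)
| BNot (b : bexp) | BAnd (b1 b2 : bexp).

Definition olift2 {A B : Type} (f : A -> A -> B) (o1 o2 : option A) :=
  match o1, o2 with Some a, Some b => Some (f a b) | _, _ => None end.

(* eval is defined (Some _) exactly on variable-free expressions *)
Fixpoint eval (e : expr) : option val :=
  match e with
  | EVal v => Some v
  | EVar _ => None
  | EAdd e1 e2 => olift2 addn (eval e1) (eval e2)
  | ESub e1 e2 => olift2 subn (eval e1) (eval e2)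
  | EMul e1 e2 => olift2 muln (eval e1) (eval e2)
  end.

Fixpoint evalb (b : bexp) : option bool :=
  match b with
  | BTrue => Some true
  | BFalse => Some false
  | BEq e1 e2 => olift2 (fun a b => a == b) (eval e1) (eval e2)
  | BLe e1 e2 => olift2 leq (eval e1) (eval e2)
  | BNot b => omap negb (evalb b)
  | BAnd b1 b2 => olift2 andb (evalb b1) (evalb b2)
  end.

Fixpoint substE (x : var) (v : val) (e : expr) : expr :=
  match e with
  | EVal w => EVal w
  | EVar y => if y == x then EVal v else EVar y
  | EAdd e1 e2 => EAdd (substE x v e1) (substE x v e2)
  | ESub e1 e2 => ESub (substE x v e1) (substE x v e2)
  | EMul e1 e2 => EMul (substE x v e1) (substE x v e2)
  end.

Fixpoint substB (x : var) (v : val) (b : bexp) : bexp :=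
  match b with
  | BTrue => BTrue
  | BFalse => BFalse
  | BEq e1 e2 => BEq (substE x v e1) (substE x v e2)
  | BLe e1 e2 => BLe (substE x v e1) (substE x v e2)
  | BNot b => BNot (substB x v b)
  | BAnd b1 b2 => BAnd (substB x v b1) (substB x v b2)
  end.

Fixpoint fvE (x : var) (e : expr) : bool :=
  match e with
  | EVal _ => false
  | EVar y => y == x
  | EAdd e1 e2 | ESub e1 e2 | EMul e1 e2 => fvE x e1 || fvE x e2
  end.

Fixpoint fvB (x : var) (b : bexp) : bool :=
  match b with
  | BTrue | BFalse => false
  | BEq e1 e2 | BLe e1 e2 => fvE x e1 || fvE x e2
  | BNot b => fvB x b
  | BAnd b1 b2 => fvB x b1 || fvB x b2
  end.

Inductive proc :=
| PNil
| PIn (c : chan) (x : var) (P : proc)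
| POut (c : chan) (e : expr) (P : proc)
| PSum (P Q : proc)
| PIf (b : bexp) (P Q : proc)
| PCall (A : pconst) (vs : seq val).

(* P{v/x} (values are closed, so no capture can occur) *)
Fixpoint substP (x : var) (v : val) (P : proc) : proc :=
  match P with
  | PNil => PNil
  | PIn c y Q => if y == x then PIn c y Q else PIn c y (substP x v Q)
  | POut c e Q => POut c (substE x v e) (substP x v Q)
  | PSum P1 P2 => PSum (substP x v P1) (substP x v P2)
  | PIf b P1 P2 => PIf (substB x v b) (substP x v P1) (substP x v P2)
  | PCall A vs => PCall A vs
  end.

Fixpoint substsP (xs : seq var) (vs : seq val) (P : proc) : proc :=
  match xs, vs with
  | x :: xs', v :: vs' => substsP xs' vs' (substP x v P)
  | _, _ => P
  end.

Fixpoint fvP (x : var) (P : proc) : bool :=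
  match P with
  | PNil => false
  | PIn _ y Q => (y != x) && fvP x Q
  | POut _ e Q => fvE x e || fvP x Q
  | PSum P1 P2 => fvP x P1 || fvP x P2
  | PIf b P1 P2 => fvB x b || fvP x P1 || fvP x P2
  | PCall _ _ => false
  end.

(* Process-constant definitions: A(\vec x) =def P is  defs A = (\vec x, P). *)
Definition defs := pconst -> seq var * proc.

Definition defs_ok (D : defs) : Prop :=
  forall A x, fvP x (D A).2 -> x \in (D A).1.

Inductive act := AIn (c : chan) (v : val) | AOut (c : chan) (v : val).

Inductive ptrans (Dl : defs) : proc -> act -> proc -> Prop :=
| pt_out c e P v : eval e = Some v -> ptrans Dl (POut c e P) (AOut c v) P
| pt_in c x P v : ptrans Dl (PIn c x P) (AIn c v) (substP x v P)
| pt_sumL P Q a P' : ptrans Dl P a P' -> ptrans Dl (PSum P Q) a P'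
| pt_sumR P Q a Q' : ptrans Dl Q a Q' -> ptrans Dl (PSum P Q) a Q'
| pt_ifT b P Q a P' : evalb b = Some true -> ptrans Dl P a P' ->
    ptrans Dl (PIf b P Q) a P'
| pt_ifF b P Q a Q' : evalb b = Some false -> ptrans Dl Q a Q' ->
    ptrans Dl (PIf b P Q) a Q'
| pt_call A vs a P' : size vs = size (Dl A).1 ->
    ptrans Dl (substsP (Dl A).1 vs (Dl A).2) a P' ->
    ptrans Dl (PCall A vs) a P'.

Inductive pcong (Dl : defs) : proc -> proc -> Prop :=
| pc_refl P : pcong Dl P P
| pc_sym P Q : pcong Dl P Q -> pcong Dl Q P
| pc_trans P Q R : pcong Dl P Q -> pcong Dl Q R -> pcong Dl P R
| pc_in c x P Q : pcong Dl P Q -> pcong Dl (PIn c x P) (PIn c x Q)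
| pc_out c e P Q : pcong Dl P Q -> pcong Dl (POut c e P) (POut c e Q)
| pc_sum P P' Q Q' : pcong Dl P P' -> pcong Dl Q Q' ->
    pcong Dl (PSum P Q) (PSum P' Q')
| pc_if b P P' Q Q' : pcong Dl P P' -> pcong Dl Q Q' ->
    pcong Dl (PIf b P Q) (PIf b P' Q')
| pc_sum0 P : pcong Dl (PSum P PNil) P
| pc_sumC P Q : pcong Dl (PSum P Q) (PSum Q P)
| pc_sumA P Q R : pcong Dl (PSum P (PSum Q R)) (PSum (PSum P Q) R)
| pc_ifT b P Q : evalb b = Some true -> pcong Dl (PIf b P Q) P
| pc_ifF b P Q : evalb b = Some false -> pcong Dl (PIf b P Q) Q
| pc_call A vs : size vs = size (Dl A).1 ->
    pcong Dl (PCall A vs) (substsP (Dl A).1 vs (Dl A).2).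

Inductive occP (Dl : defs) (c : chan) : proc -> Prop :=
| occ_in_here x P : occP Dl c (PIn c x P)
| occ_in_under d x P : occP Dl c P -> occP Dl c (PIn d x P)
| occ_out_here e P : occP Dl c (POut c e P)
| occ_out_under d e P : occP Dl c P -> occP Dl c (POut d e P)
| occ_sumL P Q : occP Dl c P -> occP Dl c (PSum P Q)
| occ_sumR P Q : occP Dl c Q -> occP Dl c (PSum P Q)
| occ_ifL b P Q : occP Dl c P -> occP Dl c (PIf b P Q)
| occ_ifR b P Q : occP Dl c Q -> occP Dl c (PIf b P Q)
| occ_call A vs : occP Dl c (Dl A).2 -> occP Dl c (PCall A vs).

(* P contains a call to a constant whose body (transitively) mentions c;
   syntactic renaming of c in P would not reach such occurrences. *)
Inductive calloccP (Dl : defs) (c : chan) : proc -> Prop :=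
| co_call A vs : occP Dl c (Dl A).2 -> calloccP Dl c (PCall A vs)
| co_in d x P : calloccP Dl c P -> calloccP Dl c (PIn d x P)
| co_out d e P : calloccP Dl c P -> calloccP Dl c (POut d e P)
| co_sumL P Q : calloccP Dl c P -> calloccP Dl c (PSum P Q)
| co_sumR P Q : calloccP Dl c Q -> calloccP Dl c (PSum P Q)
| co_ifL b P Q : calloccP Dl c P -> calloccP Dl c (PIf b P Q)
| co_ifR b P Q : calloccP Dl c Q -> calloccP Dl c (PIf b P Q).

Definition renC (c d e : chan) : chan := if e == c then d else e.

Fixpoint renP (c d : chan) (P : proc) : proc :=
  match P with
  | PNil => PNil
  | PIn e x Q => PIn (renC c d e) x (renP c d Q)
  | POut e ex Q => POut (renC c d e) ex (renP c d Q)
  | PSum P1 P2 => PSum (renP c d P1) (renP c d P2)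
  | PIf b P1 P2 => PIf b (renP c d P1) (renP c d P2)
  | PCall A vs => PCall A vs
  end.

(* NBase V E Phi  = G<Phi> with |G| = V and edge relation E,
   NRes M c       = M \ c,
   NPar M D N     = M (+)_D N. *)
Inductive net :=
| NBase (V : {fset loc}) (E : rel loc) (Phi : loc -> proc)
| NRes (M : net) (c : chan)
| NPar (M : net) (D : rel loc) (N : net).

Fixpoint inloc (p : loc) (M : net) : bool :=
  match M with
  | NBase V _ _ => p \in V
  | NRes M _ => inloc p M
  | NPar M _ N => inloc p M || inloc p N
  end.

Fixpoint isres (c : chan) (M : net) : bool :=
  match M with
  | NBase _ _ _ => false
  | NRes M d => (d == c) || isres c M
  | NPar M _ N => isres c M || isres c N
  end.

Fixpoint wf (M : net) : Prop :=
  match M with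
  | NBase V E Phi =>
      [/\ forall p q, E p q -> (p \in V) && (q \in V),
          forall p q, E p q = E q p,
          forall p, ~~ E p p &
          forall p x, p \in V -> ~~ fvP x (Phi p)]
  | NRes M _ => wf M
  | NPar M D N =>
      [/\ wf M, wf N,
          forall p, ~~ (inloc p M && inloc p N),
          forall p q, D p q -> (inloc p M && inloc q N) || (inloc p N && inloc q M) &
          forall c, ~~ (isres c M && isres c N)]
  end.

Fixpoint occN (Dl : defs) (c : chan) (M : net) : Prop :=
  match M with
  | NBase V _ Phi => exists2 p, p \in V & occP Dl c (Phi p)
  | NRes M d => c = d \/ occN Dl c M
  | NPar M _ N => occN Dl c M \/ occN Dl c N
  end.

Fixpoint fcN (Dl : defs) (c : chan) (M : net) : Prop :=
  match M with
  | NBase V _ Phi => exists2 p, p \in V & occP Dl c (Phi p)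
  | NRes M d => c <> d /\ fcN Dl c M
  | NPar M _ N => fcN Dl c M \/ fcN Dl c N
  end.

(* free occurrences of c in M are all syntactically visible (not hidden
   inside constant bodies), so that the renaming renN c d M is correct *)
Fixpoint renokN (Dl : defs) (c : chan) (M : net) : Prop :=
  match M with
  | NBase V _ Phi => forall p, p \in V -> ~ calloccP Dl c (Phi p)
  | NRes M d => d = c \/ renokN Dl c M
  | NPar M _ N => renokN Dl c M /\ renokN Dl c N
  end.

Fixpoint renN (c d : chan) (M : net) : net :=
  match M with
  | NBase V E Phi => NBase V E (fun p => renP c d (Phi p))
  | NRes M e => if e == c then NRes M e else NRes (renN c d M) e
  | NPar M D N => NPar (renN c d M) D (renN c d N)
  end.

Inductive ncong (Dl : defs) : net -> net -> Prop :=
| nc_refl M : ncong Dl M M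
| nc_sym M N : ncong Dl M N -> ncong Dl N M
| nc_trans M N O : ncong Dl M N -> ncong Dl N O -> ncong Dl M O
| nc_res M N c : ncong Dl M N -> ncong Dl (NRes M c) (NRes N c)
| nc_par M M' D N N' : ncong Dl M M' -> ncong Dl N N' ->
    ncong Dl (NPar M D N) (NPar M' D N')
| nc_base V E Phi Psi : (forall p, p \in V -> pcong Dl (Phi p) (Psi p)) ->
    ncong Dl (NBase V E Phi) (NBase V E Psi)
| nc_alpha M c d : ~ occN Dl d M -> renokN Dl c M ->
    ncong Dl (NRes M c) (NRes (renN c d M) d)
| nc_swap M c d : ncong Dl (NRes (NRes M c) d) (NRes (NRes M d) c)
| nc_comm M D N : ncong Dl (NPar M D N) (NPar N D M)
| nc_extr M D N c : ~ fcN Dl c M ->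
    ncong Dl (NRes (NPar M D N) c) (NPar M D (NRes N c)).

Inductive lab := LAct (p : loc) (a : act) | LTau.

Definition act_chan (a : act) : chan :=
  match a with AIn c _ => c | AOut c _ => c end.

Definition chan_in_lab (c : chan) (l : lab) : bool :=
  match l with LAct _ a => act_chan a == c | LTau => false end.

Definition upd (Phi : loc -> proc) (p : loc) (P : proc) : loc -> proc :=
  fun q => if q == p then P else Phi q.

Definition edgeD (D : rel loc) (p q : loc) : bool := D p q || D q p.

Inductive ntrans (Dl : defs) : net -> lab -> net -> Prop :=
| nt_send V E Phi p c v P' : p \in V -> ptrans Dl (Phi p) (AOut c v) P' ->
    ntrans Dl (NBase V E Phi) (LAct p (AOut c v)) (NBase V E (upd Phi p P'))
| nt_recv V E Phi p c v P' : p \in V -> ptrans Dl (Phi p) (AIn c v) P' ->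
    ntrans Dl (NBase V E Phi) (LAct p (AIn c v)) (NBase V E (upd Phi p P'))
| nt_bcastL M M' N N' D p q c v :
    ntrans Dl M (LAct p (AOut c v)) M' -> ntrans Dl N (LAct q (AIn c v)) N' ->
    edgeD D p q ->
    ntrans Dl (NPar M D N) (LAct p (AOut c v)) (NPar M' D N')
| nt_bcastR M M' N N' D p q c v :
    ntrans Dl M (LAct p (AOut c v)) M' -> ntrans Dl N (LAct q (AIn c v)) N' ->
    edgeD D p q ->
    ntrans Dl (NPar N D M) (LAct p (AOut c v)) (NPar N' D M')
| nt_res1 M M' p c v : ntrans Dl M (LAct p (AOut c v)) M' ->
    ntrans Dl (NRes M c) LTau (NRes M' c)
| nt_res2 M M' l c : ntrans Dl M l M' -> ~~ chan_in_lab c l ->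
    ntrans Dl (NRes M c) l (NRes M' c)
| nt_parL M M' D N l : ntrans Dl M l M' ->
    ntrans Dl (NPar M D N) l (NPar M' D N)
| nt_parR M D N N' l : ntrans Dl N l N' ->
    ntrans Dl (NPar M D N) l (NPar M D N').

(* Each generating axiom is a
   simulation in both directions, and simulations are closed under
   composition, restriction and parallel composition, which covers the
   congruence closure. For processes, the input prefix needs congruence to be
   stable under substitution of a value; for constant calls this holds because,
   by [defs_ok], an instantiated body has no free variable left. The delicate
   network axiom is alpha-conversion [M\c == M{d/c}\d]: transitions are
   transported along the renaming in both directions, which works because [d]
   is fresh, so the renaming is injective on every channel that can occur in a
   label, and because [renokN] rules out free occurrences of [c] hidden in
   constant bodies, where the renaming cannot reach. *)

From mathcomp Require Import all_boot finmap.
From Stdlib Require Import FunctionalExtensionality.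

Set Implicit Arguments.
Unset Strict Implicit.
Unset Printing Implicit Defensive.

Lemma substE_closed x v e n : eval e = Some n -> substE x v e = e.
Proof.
elim: e n => //= [e1 IH1 e2 IH2|e1 IH1 e2 IH2|e1 IH1 e2 IH2] n;
  case E1: (eval e1) => [a|] //; case E2: (eval e2) => [b|] //= _;
  by rewrite (IH1 a) // (IH2 b).
Qed.

Lemma substB_closed x v b n : evalb b = Some n -> substB x v b = b.
Proof.
elim: b n => //= [e1 e2|e1 e2|b IH|b1 IH1 b2 IH2] n.
- by case E1: (eval e1) => [a|] //; case E2: (eval e2) => [m|] //= _;
    rewrite (substE_closed _ _ E1) (substE_closed _ _ E2).
- by case E1: (eval e1) => [a|] //; case E2: (eval e2) => [m|] //= _;
    rewrite (substE_closed _ _ E1) (substE_closed _ _ E2).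
- by case E: (evalb b) => [a|] //= _; rewrite (IH a).
- by case E1: (evalb b1) => [a|] //; case E2: (evalb b2) => [m|] //= _;
    rewrite (IH1 a) // (IH2 m).
Qed.

Lemma fvE_substE y x v e : fvE y (substE x v e) -> fvE y e && (y != x).
Proof.
elim: e => //= [z|e1 IH1 e2 IH2|e1 IH1 e2 IH2|e1 IH1 e2 IH2].
- by case: eqP => //= /eqP zx /eqP <-; rewrite eqxx.
all: by case/orP=> [/IH1|/IH2] /andP[-> ->]; rewrite ?orbT.
Qed.

Lemma fvB_substB y x v b : fvB y (substB x v b) -> fvB y b && (y != x).
Proof.
elim: b => //= [e1 e2|e1 e2|b1 IH1 b2 IH2].
1,2: by case/orP=> /fvE_substE /andP[-> ->]; rewrite ?orbT.
by case/orP=> [/IH1|/IH2] /andP[-> ->]; rewrite ?orbT.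
Qed.

Lemma fvP_substP y x v P : fvP y (substP x v P) -> fvP y P && (y != x).
Proof.
elim: P => //= [c z Q IH|c e Q IH|P1 IH1 P2 IH2|b P1 IH1 P2 IH2].
- case: eqP => [->|_] /= /andP[yz].
    by move=> ->; rewrite yz eq_sym.
  by case/IH/andP=> -> ->; rewrite yz.
- by case/orP=> [/fvE_substE|/IH] /andP[-> ->]; rewrite ?orbT.
- by case/orP=> [/IH1|/IH2] /andP[-> ->]; rewrite ?orbT.
- by case/orP=> [/orP[/fvB_substB|/IH1]|/IH2] /andP[-> ->]; rewrite ?orbT.
Qed.

Lemma fvP_substsP y xs vs P : size vs = size xs ->
  fvP y (substsP xs vs P) -> fvP y P && (y \notin xs).
Proof.
elim: xs vs P => [|x xs IH] [|v vs] P //=; first by move=> _ ->.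
move=> [] /IH Hs /Hs /andP[/fvP_substP/andP[-> yx]].
by rewrite in_cons negb_or yx.
Qed.

Lemma substE_id x v e : ~~ fvE x e -> substE x v e = e.
Proof.
elim: e => //= [z|e1 IH1 e2 IH2|e1 IH1 e2 IH2|e1 IH1 e2 IH2]; first by case: eqP.
all: by rewrite negb_or => /andP[/IH1 -> /IH2 ->].
Qed.

Lemma substB_id x v b : ~~ fvB x b -> substB x v b = b.
Proof.
elim: b => //= [e1 e2|e1 e2|b IH|b1 IH1 b2 IH2]; last 2 first.
- by move/IH->.
- by rewrite negb_or => /andP[/IH1 -> /IH2 ->].
all: by rewrite negb_or => /andP[/(substE_id v) -> /(substE_id v) ->].
Qed.

Lemma substP_id x v P : ~~ fvP x P -> substP x v P = P.
Proof.
elim: P => //= [c z Q IH|c e Q IH|P1 IH1 P2 IH2|b P1 IH1 P2 IH2].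
- by case: eqP => // zx H; rewrite IH //; move: H; rewrite (introF eqP zx).
- by rewrite negb_or => /andP[/(substE_id v) -> /IH ->].
- by rewrite negb_or => /andP[/IH1 -> /IH2 ->].
- by rewrite !negb_or => /andP[/andP[/(substB_id v) -> /IH1 ->] /IH2 ->].
Qed.

Section ProcessCongruence.

Variable Dl : defs.
Hypothesis Dl_ok : defs_ok Dl.

Lemma pcong_substP x v P Q :
  pcong Dl P Q -> pcong Dl (substP x v P) (substP x v Q).
Proof.
elim=> {P Q} /=.
- by move=> P; apply: pc_refl.
- by move=> P Q _; apply: pc_sym.
- by move=> P Q R _ H1 _; apply: pc_trans.
- by move=> c y P Q C IH; case: eqP => _; apply: pc_in.
- by move=> c e P Q _; apply: pc_out.
- by move=> P P' Q Q' _ H1 _; apply: pc_sum.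
- by move=> b P P' Q Q' _ H1 _; apply: pc_if.
- by move=> P; apply: pc_sum0.
- by move=> P Q; apply: pc_sumC.
- by move=> P Q R; apply: pc_sumA.
- by move=> b P Q Hb; rewrite (substB_closed _ _ Hb); apply: pc_ifT.
- by move=> b P Q Hb; rewrite (substB_closed _ _ Hb); apply: pc_ifF.
- move=> A vs Hs; rewrite substP_id; first exact: pc_call.
  by apply/negP => /(fvP_substsP Hs) /andP[/Dl_ok ->].
Qed.

Lemma ptrans_sumP P Q a R :
  ptrans Dl (PSum P Q) a R <-> ptrans Dl P a R \/ ptrans Dl Q a R.
Proof.
split=> [T|[T|T]]; [by inversion T; [left|right] | exact: pt_sumL | exact: pt_sumR].
Qed.

Lemma ptrans_ifP b P Q a R : ptrans Dl (PIf b P Q) a R <->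
  evalb b = Some true /\ ptrans Dl P a R \/ evalb b = Some false /\ ptrans Dl Q a R.
Proof.
split=> [T|[[Hb T]|[Hb T]]]; [by inversion T; [left|right] | exact: pt_ifT | exact: pt_ifF].
Qed.

Definition psim P Q := forall a P', ptrans Dl P a P' ->
  exists2 Q', ptrans Dl Q a Q' & pcong Dl P' Q'.

Lemma psim_refl P : psim P P.
Proof. by move=> a P' T; exists P' => //; apply: pc_refl. Qed.

Lemma psim_trans P Q R : psim P Q -> psim Q R -> psim P R.
Proof.
move=> HPQ HQR a P' /HPQ [Q' /HQR [R' TR CQR] CPQ].
by exists R' => //; apply: pc_trans CQR.
Qed.

Lemma psim_incl P Q : (forall a P', ptrans Dl P a P' -> ptrans Dl Q a P') ->
  psim P Q.
Proof. by move=> H a P' /H T; exists P' => //; apply: pc_refl. Qed.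

Lemma psim_in c x P Q : pcong Dl P Q -> psim (PIn c x P) (PIn c x Q).
Proof.
move=> C a P' T; inversion T; subst.
by eexists; [apply: pt_in | apply: pcong_substP].
Qed.

Lemma psim_out c e P Q : pcong Dl P Q -> psim (POut c e P) (POut c e Q).
Proof. by move=> C a P' T; inversion T; subst; exists Q => //; apply: pt_out. Qed.

Lemma psim_sum P P' Q Q' : psim P P' -> psim Q Q' -> psim (PSum P Q) (PSum P' Q').
Proof.
move=> HP HQ a R /ptrans_sumP [/HP|/HQ] [X T C];
  exists X => //; apply/ptrans_sumP; by [left | right].
Qed.

Lemma psim_if b P P' Q Q' : psim P P' -> psim Q Q' -> psim (PIf b P Q) (PIf b P' Q').
Proof.
move=> HP HQ a R /ptrans_ifP [[Hb /HP]|[Hb /HQ]] [X T C];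
  exists X => //; apply/ptrans_ifP; by [left | right].
Qed.

Lemma pcong_psim P Q : pcong Dl P Q -> psim P Q /\ psim Q P.
Proof.
elim=> {P Q}.
- by move=> P; split; apply: psim_refl.
- by move=> P Q _ [].
- by move=> P Q R _ [H1 H2] _ [H3 H4]; split; apply: psim_trans; eassumption.
- by move=> c x P Q C _; split; apply: psim_in => //; apply: pc_sym.
- by move=> c e P Q C _; split; apply: psim_out => //; apply: pc_sym.
- by move=> P P' Q Q' _ [H1 H2] _ [H3 H4]; split; apply: psim_sum.
- by move=> b P P' Q Q' _ [H1 H2] _ [H3 H4]; split; apply: psim_if.
- move=> P; split; apply: psim_incl => a R T; last by apply/ptrans_sumP; left.
  by case/ptrans_sumP: T => // T; inversion T.
- by move=> P Q; split; apply: psim_incl => a R /ptrans_sumP T; apply/ptrans_sumP; tauto.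
- move=> P Q R; split; apply: psim_incl => a X; rewrite !ptrans_sumP; tauto.
- move=> b P Q Hb; split; apply: psim_incl => a X; rewrite ptrans_ifP Hb;
    [case=> [[] | []] | left] => //.
- move=> b P Q Hb; split; apply: psim_incl => a X; rewrite ptrans_ifP Hb;
    [case=> [[] | []] | right] => //.
- move=> A vs Hs; split; apply: psim_incl => a X T; last exact: pt_call.
  by inversion T.
Qed.

End ProcessCongruence.

Section ChannelsInProcesses.

Variable Dl : defs.

Lemma occP_substP c x v P : occP Dl c (substP x v P) -> occP Dl c P.
Proof.
elim: P => //= [d y Q IH|d e Q IH|P1 IH1 P2 IH2|b P1 IH1 P2 IH2].
- case: eqP => _ // H; inversion H; subst; [exact: occ_in_here | exact/occ_in_under/IH].
- move=> H; inversion H; subst; [exact: occ_out_here | exact/occ_out_under/IH].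
- by move=> H; inversion H; subst; [apply/occ_sumL/IH1 | apply/occ_sumR/IH2].
- by move=> H; inversion H; subst; [apply/occ_ifL/IH1 | apply/occ_ifR/IH2].
Qed.

Lemma occP_substsP c xs vs P : occP Dl c (substsP xs vs P) -> occP Dl c P.
Proof. by elim: xs vs P => [|x xs IH] [|v vs] P //= /IH /occP_substP. Qed.

Lemma calloccP_substP c x v P : calloccP Dl c (substP x v P) -> calloccP Dl c P.
Proof.
elim: P => //= [d y Q IH|d e Q IH|P1 IH1 P2 IH2|b P1 IH1 P2 IH2].
- by case: eqP => _ // H; inversion H; subst; apply/co_in/IH.
- by move=> H; inversion H; subst; apply/co_out/IH.
- by move=> H; inversion H; subst; [apply/co_sumL/IH1 | apply/co_sumR/IH2].
- by move=> H; inversion H; subst; [apply/co_ifL/IH1 | apply/co_ifR/IH2].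
Qed.

Lemma calloccP_substsP c xs vs P :
  calloccP Dl c (substsP xs vs P) -> calloccP Dl c P.
Proof. by elim: xs vs P => [|x xs IH] [|v vs] P //= /IH /calloccP_substP. Qed.

Lemma calloccP_occP c P : calloccP Dl c P -> occP Dl c P.
Proof.
elim=> {P} [A vs|d x P _|d e P _|P Q _|P Q _|b P Q _|b P Q _] H.
- exact: occ_call.
- exact: occ_in_under.
- exact: occ_out_under.
- exact: occ_sumL.
- exact: occ_sumR.
- exact: occ_ifL.
- exact: occ_ifR.
Qed.

Lemma ptrans_chan_occP P a P' : ptrans Dl P a P' -> occP Dl (act_chan a) P.
Proof.
elim=> {P a P'} /=.
- by move=> d e P v _; apply: occ_out_here.
- by move=> d x P v; apply: occ_in_here.
- by move=> P Q a P' _; apply: occ_sumL.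
- by move=> P Q a P' _; apply: occ_sumR.
- by move=> b P Q a P' _ _; apply: occ_ifL.
- by move=> b P Q a P' _ _; apply: occ_ifR.
- by move=> A vs a P' _ _ /occP_substsP; apply: occ_call.
Qed.

Lemma ptrans_occP c P a P' : ptrans Dl P a P' -> occP Dl c P' -> occP Dl c P.
Proof.
elim=> {P a P'}.
- by move=> d e P v _; apply: occ_out_under.
- by move=> d x P v /occP_substP; apply: occ_in_under.
- by move=> P Q a P' _ IH /IH; apply: occ_sumL.
- by move=> P Q a P' _ IH /IH; apply: occ_sumR.
- by move=> b P Q a P' _ _ IH /IH; apply: occ_ifL.
- by move=> b P Q a P' _ _ IH /IH; apply: occ_ifR.
- by move=> A vs a P' _ _ IH /IH /occP_substsP; apply: occ_call.
Qed.

Lemma ptrans_calloccP c P a P' :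
  ptrans Dl P a P' -> calloccP Dl c P' -> calloccP Dl c P.
Proof.
elim=> {P a P'}.
- by move=> d e P v _; apply: co_out.
- by move=> d x P v /calloccP_substP; apply: co_in.
- by move=> P Q a P' _ IH /IH; apply: co_sumL.
- by move=> P Q a P' _ IH /IH; apply: co_sumR.
- by move=> b P Q a P' _ _ IH /IH; apply: co_ifL.
- by move=> b P Q a P' _ _ IH /IH; apply: co_ifR.
- by move=> A vs a P' _ _ IH /IH /calloccP_substsP /calloccP_occP; apply: co_call.
Qed.

Lemma renP_id c d P : ~ occP Dl c P -> renP c d P = P.
Proof.
elim: P => //= [e x Q IH|e x Q IH|P1 IH1 P2 IH2|b P1 IH1 P2 IH2] H.
- rewrite IH => [|Hc]; last exact/H/occ_in_under.
  by rewrite /renC; case: eqP => // E; subst; case: H; apply: occ_in_here.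
- rewrite IH => [|Hc]; last exact/H/occ_out_under.
  by rewrite /renC; case: eqP => // E; subst; case: H; apply: occ_out_here.
- by rewrite IH1 ?IH2 // => Hc; apply: H; [apply: occ_sumR | apply: occ_sumL].
- by rewrite IH1 ?IH2 // => Hc; apply: H; [apply: occ_ifR | apply: occ_ifL].
Qed.

Lemma renP_substP c d x v P : renP c d (substP x v P) = substP x v (renP c d P).
Proof.
elim: P => //= [e y Q IH|e ex Q ->|P1 -> P2 ->|b P1 -> P2 ->] //.
by case: eqP => _ //=; rewrite IH.
Qed.

Definition renA (c d : chan) (a : act) : act :=
  match a with AIn e v => AIn (renC c d e) v | AOut e v => AOut (renC c d e) v end.

Lemma renA_id c d a : act_chan a <> c -> renA c d a = a.
Proof. by case: a => e v /= H; rewrite /renC; case: eqP. Qed.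

Lemma ptrans_call_nocc c A vs a P' : ~ calloccP Dl c (PCall A vs) ->
  ptrans Dl (PCall A vs) a P' -> act_chan a <> c /\ ~ occP Dl c P'.
Proof.
move=> Hc T; split=> [E|/(ptrans_occP T) H]; apply/Hc/co_call.
- by have := ptrans_chan_occP T; rewrite E => H; inversion H.
- by inversion H.
Qed.

Lemma ptrans_renP c d P a P' : ~ calloccP Dl c P -> ptrans Dl P a P' ->
  ptrans Dl (renP c d P) (renA c d a) (renP c d P').
Proof.
move=> Hc T; elim: T Hc => {P a P'} /=.
- by move=> e ex P v He _; apply: pt_out.
- by move=> e x P v _; rewrite renP_substP; apply: pt_in.
- by move=> P Q a P' _ IH H; apply/pt_sumL/IH => H'; apply/H/co_sumL.
- by move=> P Q a P' _ IH H; apply/pt_sumR/IH => H'; apply/H/co_sumR.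
- by move=> b P Q a P' Hb _ IH H; apply: pt_ifT => //; apply: IH => H'; apply/H/co_ifL.
- by move=> b P Q a P' Hb _ IH H; apply: pt_ifF => //; apply: IH => H'; apply/H/co_ifR.
- move=> A vs a P' Hs T _ H.
  have [ac P'c] := ptrans_call_nocc H (pt_call Hs T).
  by rewrite renA_id // (renP_id d P'c); apply: pt_call.
Qed.

Lemma ptrans_renP_inv c d P a' R : ~ calloccP Dl c P ->
  ptrans Dl (renP c d P) a' R ->
  exists a P', [/\ a' = renA c d a, R = renP c d P' & ptrans Dl P a P'].
Proof.
elim: P a' R => /= [|e x Q _|e ex Q _|P1 IH1 P2 IH2|b P1 IH1 P2 IH2|A vs] a' R Hc T.
- by inversion T.
- inversion T; subst.
  by exists (AIn e v), (substP x v Q); rewrite renP_substP; split=> //; apply: pt_in.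
- by inversion T; subst; exists (AOut e v), Q; split=> //; apply: pt_out.
- case/ptrans_sumP: T => [/IH1|/IH2] [|a [P' [-> -> T]]].
  + by move=> H; apply/Hc/co_sumL.
  + by exists a, P'; split=> //; apply: pt_sumL.
  + by move=> H; apply/Hc/co_sumR.
  + by exists a, P'; split=> //; apply: pt_sumR.
- case/ptrans_ifP: T => [[Hb /IH1]|[Hb /IH2]] [|a [P' [-> -> T]]].
  + by move=> H; apply/Hc/co_ifL.
  + by exists a, P'; split=> //; apply: pt_ifT.
  + by move=> H; apply/Hc/co_ifR.
  + by exists a, P'; split=> //; apply: pt_ifF.
- have [ac P'c] := ptrans_call_nocc Hc T.
  by exists a', R; rewrite renA_id // (renP_id d P'c).
Qed.

End ChannelsInProcesses.

Section NetworkTransitions.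

Variable Dl : defs.

Lemma ntrans_base_inv V E Phi l X : ntrans Dl (NBase V E Phi) l X ->
  exists p a P', [/\ l = LAct p a, X = NBase V E (upd Phi p P'), p \in V
                   & ptrans Dl (Phi p) a P'].
Proof. by move=> T; inversion T; subst; do 3 eexists; split; eauto. Qed.

Lemma ntrans_base V E Phi p a P' : p \in V -> ptrans Dl (Phi p) a P' ->
  ntrans Dl (NBase V E Phi) (LAct p a) (NBase V E (upd Phi p P')).
Proof. by case: a => c v; [apply: nt_recv | apply: nt_send]. Qed.

Lemma ntrans_res_inv M c l X : ntrans Dl (NRes M c) l X ->
  (exists M' p v, [/\ l = LTau, X = NRes M' c & ntrans Dl M (LAct p (AOut c v)) M'])
  \/ exists M', [/\ X = NRes M' c, ntrans Dl M l M' & ~~ chan_in_lab c l].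
Proof.
by move=> T; inversion T; subst; [left; do 3 eexists | right; eexists]; split; eauto.
Qed.

Lemma ntrans_par_inv M D N l X : ntrans Dl (NPar M D N) l X ->
  [\/ exists M' N' p q c v, [/\ l = LAct p (AOut c v), X = NPar M' D N',
        ntrans Dl M (LAct p (AOut c v)) M', ntrans Dl N (LAct q (AIn c v)) N'
        & edgeD D p q],
      exists M' N' p q c v, [/\ l = LAct p (AOut c v), X = NPar M' D N',
        ntrans Dl N (LAct p (AOut c v)) N', ntrans Dl M (LAct q (AIn c v)) M'
        & edgeD D p q],
      exists2 M', X = NPar M' D N & ntrans Dl M l M'
    | exists2 N', X = NPar M D N' & ntrans Dl N l N'].
Proof.
move=> T; inversion T; subst.
- by constructor 1; do 6 eexists; split; eauto.
- by constructor 2; do 6 eexists; split; eauto.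
- by constructor 3; eexists; eauto.
- by constructor 4; eexists; eauto.
Qed.

Lemma ntrans_chan_fcN M l M' c :
  ntrans Dl M l M' -> chan_in_lab c l -> fcN Dl c M.
Proof.
elim=> {M l M'} //=.
- by move=> V E Phi p d v P' Hp T /eqP <-; exists p => //; apply: (ptrans_chan_occP T).
- by move=> V E Phi p d v P' Hp T /eqP <-; exists p => //; apply: (ptrans_chan_occP T).
- by move=> M M' N N' D p q d v _ IH _ _ _ /IH; left.
- by move=> M M' N N' D p q d v _ IH _ _ _ /IH; right.
- by move=> M M' l d _ IH Hl Hc; split=> [E|]; [rewrite -E Hc in Hl | apply: IH].
- by move=> M M' D N l _ IH /IH; left.
- by move=> M D N N' l _ IH /IH; right.
Qed.

Lemma fcN_occN c M : fcN Dl c M -> occN Dl c M.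
Proof.
elim: M => //= [M IH d [_ /IH]|M IH1 D N IH2 [/IH1|/IH2]]; by [right | left].
Qed.

Lemma ntrans_nocc_lab d M l M' :
  ~ occN Dl d M -> ntrans Dl M l M' -> ~~ chan_in_lab d l.
Proof. by move=> Hd T; apply/negP => /(ntrans_chan_fcN T) /fcN_occN. Qed.

Lemma occP_upd c (V : {fset loc}) (Phi : loc -> proc) p a P' :
  p \in V -> ptrans Dl (Phi p) a P' ->
  (exists2 q, q \in V & occP Dl c (upd Phi p P' q)) ->
  exists2 q, q \in V & occP Dl c (Phi q).
Proof.
move=> Hp T [q Hq]; rewrite /upd; case: eqP => [_ H|_]; last by exists q.
by exists p => //; apply: (ptrans_occP T).
Qed.

Lemma ntrans_fcN c M l M' : ntrans Dl M l M' -> fcN Dl c M' -> fcN Dl c M.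
Proof.
elim=> {M l M'} /=.
1,2: by move=> V E Phi p d v P' Hp T; apply: occP_upd Hp T.
- by move=> M M' N N' D p q d v _ IH1 _ IH2 _ [/IH1|/IH2]; by [left | right].
- by move=> M M' N N' D p q d v _ IH1 _ IH2 _ [/IH2|/IH1]; by [left | right].
- by move=> M M' p d v _ IH [cd /IH].
- by move=> M M' l d _ IH _ [cd /IH].
- by move=> M M' D N l _ IH [/IH|]; by [left | right].
- by move=> M D N N' l _ IH [|/IH]; by [left | right].
Qed.

Lemma ntrans_nfcN c M l M' : ~ fcN Dl c M -> ntrans Dl M l M' -> ~ fcN Dl c M'.
Proof. by move=> Hc T /(ntrans_fcN T). Qed.

Lemma ntrans_occN c M l M' : ntrans Dl M l M' -> occN Dl c M' -> occN Dl c M.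
Proof.
elim=> {M l M'} /=.
1,2: by move=> V E Phi p d v P' Hp T; apply: occP_upd Hp T.
- by move=> M M' N N' D p q d v _ IH1 _ IH2 _ [/IH1|/IH2]; by [left | right].
- by move=> M M' N N' D p q d v _ IH1 _ IH2 _ [/IH2|/IH1]; by [left | right].
- by move=> M M' p d v _ IH [|/IH]; by [left | right].
- by move=> M M' l d _ IH _ [|/IH]; by [left | right].
- by move=> M M' D N l _ IH [/IH|]; by [left | right].
- by move=> M D N N' l _ IH [|/IH]; by [left | right].
Qed.

Lemma ntrans_renokN c M l M' :
  ntrans Dl M l M' -> renokN Dl c M -> renokN Dl c M'.
Proof.
elim=> {M l M'} /=.
1,2: move=> V E Phi p d v P' Hp T Hc q Hq; rewrite /upd; case: eqP => _;
  last exact: Hc; by move/(ptrans_calloccP T); apply: Hc.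
- by move=> M M' N N' D p q d v _ IH1 _ IH2 _ [/IH1 ? /IH2 ?].
- by move=> M M' N N' D p q d v _ IH1 _ IH2 _ [/IH2 ? /IH1 ?].
- by move=> M M' p d v _ IH [|/IH]; by [left | right].
- by move=> M M' l d _ IH _ [|/IH]; by [left | right].
- by move=> M M' D N l _ IH [/IH].
- by move=> M D N N' l _ IH [? /IH].
Qed.

Definition renL (c d : chan) (l : lab) : lab :=
  match l with LAct p a => LAct p (renA c d a) | LTau => LTau end.

Lemma renL_id c d l : ~~ chan_in_lab c l -> renL c d l = l.
Proof. by case: l => //= p a /eqP ac; rewrite renA_id. Qed.

Lemma chan_in_renL c d l : chan_in_lab c l -> chan_in_lab d (renL c d l).
Proof. by case: l => //= p [] f v /= /eqP ->; rewrite /renC eqxx. Qed.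

Lemma renL_fixed c d l : ~~ chan_in_lab d (renL c d l) -> renL c d l = l.
Proof. by move=> H; apply: renL_id; apply: contra H; apply: chan_in_renL. Qed.

Lemma chan_in_renL_other c d e l :
  e <> c -> e <> d -> chan_in_lab e (renL c d l) = chan_in_lab e l.
Proof.
by case: l => //= p [] f v /= /eqP ec /eqP ed; rewrite /renC; case: (f =P c) => // ->;
  rewrite ![_ == e]eq_sym (negPf ec) (negPf ed).
Qed.

Lemma renC_inj c d x y : x <> d -> y <> d -> renC c d x = renC c d y -> x = y.
Proof. by rewrite /renC; do 2 case: eqP => [->|_]; congruence. Qed.

Lemma renL_bcast_inv c d l1 l2 p q f v :
  ~~ chan_in_lab d l1 -> ~~ chan_in_lab d l2 ->
  LAct p (AOut f v) = renL c d l1 -> LAct q (AIn f v) = renL c d l2 ->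
  exists2 f0, l1 = LAct p (AOut f0 v) & l2 = LAct q (AIn f0 v).
Proof.
case: l1 => [p1 [f1 v1|f1 v1]|] //; case: l2 => [p2 [f2 v2|f2 v2]|] //=.
move=> /eqP f1d /eqP f2d [-> -> ->] [-> /(renC_inj f1d f2d) -> ->].
by exists f2.
Qed.

Lemma renL_out_fresh c d l p v :
  ~~ chan_in_lab d l -> LAct p (AOut d v) = renL c d l -> l = LAct p (AOut c v).
Proof.
case: l => [p0 [f v0|f v0]|] //=; rewrite /renC.
by case: (f =P c) => [-> _ [-> ->] //|_ /negP fd [_ E _]]; case: fd; rewrite E.
Qed.

Lemma renN_upd c d Phi p P :
  (fun q => renP c d (upd Phi p P q)) = upd (fun q => renP c d (Phi q)) p (renP c d P).
Proof. by apply: functional_extensionality => q; rewrite /upd; case: (q == p). Qed.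

Lemma ntrans_renN c d M l M' : renokN Dl c M -> ~ occN Dl d M ->
  ntrans Dl M l M' -> ntrans Dl (renN c d M) (renL c d l) (renN c d M').
Proof.
move=> + + T; elim: T => {M l M'} /=.
1,2: move=> V E Phi p e v P' Hp T Hc _; rewrite renN_upd;
  exact: ntrans_base Hp (ptrans_renP d (Hc p Hp) T).
- move=> M M' N N' D p q e v _ IH1 _ IH2 HD [Hc1 Hc2] Hd.
  have T1 := IH1 Hc1 (fun H => Hd (or_introl H)).
  have T2 := IH2 Hc2 (fun H => Hd (or_intror H)).
  exact: nt_bcastL T1 T2 HD.
- move=> M M' N N' D p q e v _ IH1 _ IH2 HD [Hc2 Hc1] Hd.
  have T1 := IH1 Hc1 (fun H => Hd (or_intror H)).
  have T2 := IH2 Hc2 (fun H => Hd (or_introl H)).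
  exact: nt_bcastR T1 T2 HD.
- move=> M M' p e v T IH Hc Hd; case: eqP => [_|ec]; first exact: nt_res1 T.
  case: Hc => [/esym //|Hc].
  have := IH Hc (fun H => Hd (or_intror H)); rewrite /= /renC (introF eqP ec).
  exact: nt_res1.
- move=> M M' l e T IH Hl Hc Hd; case: eqP => [ec|ec].
    by subst; rewrite renL_id //; apply: nt_res2.
  case: Hc => [/esym //|Hc].
  apply: nt_res2; first by apply: IH => // H; apply: Hd; right.
  by rewrite chan_in_renL_other // => ed; apply: Hd; left; rewrite ed.
- by move=> M M' D N l _ IH [Hc _] Hd; apply/nt_parL/IH => // H; apply: Hd; left.
- by move=> M D N N' l _ IH [_ Hc] Hd; apply/nt_parR/IH => // H; apply: Hd; right.
Qed.

Definition renN_reflects c d M := forall l' X, ntrans Dl (renN c d M) l' X ->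
  exists l M', [/\ l' = renL c d l, X = renN c d M' & ntrans Dl M l M'].

Lemma renN_reflects_base c d V E Phi :
  renokN Dl c (NBase V E Phi) -> renN_reflects c d (NBase V E Phi).
Proof.
move=> Hc l' X /ntrans_base_inv [p [a' [R [-> -> Hp T]]]].
have [a [P' [-> -> T']]] := ptrans_renP_inv (Hc p Hp) T.
exists (LAct p a), (NBase V E (upd Phi p P')); rewrite /= renN_upd.
by split=> //; apply: ntrans_base.
Qed.

Lemma renN_reflects_bound c d M : renN_reflects c d (NRes M c).
Proof.
move=> l' X; rewrite /= eqxx.
case/ntrans_res_inv => [[M' [p [v [-> -> T]]]]|[M' [-> T Hl]]].
  by exists LTau, (NRes M' c); rewrite /= eqxx; split=> //; apply: nt_res1 T.
by exists l', (NRes M' c); rewrite /= eqxx renL_id //; split=> //; apply: nt_res2.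
Qed.

Lemma renN_reflects_res c d M e : e <> c -> e <> d ->
  renN_reflects c d M -> renN_reflects c d (NRes M e).
Proof.
move=> ec ed IH l' X; rewrite /= (introF eqP ec).
case/ntrans_res_inv => [[X0 [p [v [-> -> T]]]]|[X0 [-> T Hl]]];
  have [l [M' [El -> T']]] := IH _ _ T.
- have El' : l = LAct p (AOut e v) by rewrite El renL_fixed // -El /=; apply/eqP.
  exists LTau, (NRes M' e); rewrite /= (introF eqP ec); split=> //.
  by rewrite El' in T'; apply: nt_res1 T'.
- exists l, (NRes M' e); rewrite /= (introF eqP ec); split=> //.
  by apply: nt_res2 T' _; rewrite -(chan_in_renL_other l ec ed) -El.
Qed.

(* The two sides of a broadcast agree on the renamed channel, hence on the
   original one: the renaming is injective away from the fresh channel [d]. *)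
Lemma renN_reflects_bcast c d M N p q f v X Y :
  ~ occN Dl d M -> ~ occN Dl d N -> renN_reflects c d M -> renN_reflects c d N ->
  ntrans Dl (renN c d M) (LAct p (AOut f v)) X ->
  ntrans Dl (renN c d N) (LAct q (AIn f v)) Y ->
  exists f0 M' N', [/\ f = renC c d f0, X = renN c d M', Y = renN c d N',
    ntrans Dl M (LAct p (AOut f0 v)) M' & ntrans Dl N (LAct q (AIn f0 v)) N'].
Proof.
move=> HdM HdN RM RN /RM [l1 [M' [El1 -> T1]]] /RN [l2 [N' [El2 -> T2]]].
have [f0 E1 E2] :=
  renL_bcast_inv (ntrans_nocc_lab HdM T1) (ntrans_nocc_lab HdN T2) El1 El2.
subst l1 l2; exists f0, M', N'; split=> //.
by case: El1.
Qed.

Lemma renN_reflects_par c d M D N : ~ occN Dl d M -> ~ occN Dl d N ->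
  renN_reflects c d M -> renN_reflects c d N -> renN_reflects c d (NPar M D N).
Proof.
move=> HdM HdN RM RN l' X /ntrans_par_inv [].
- move=> [X1 [X2 [p [q [f [v [-> -> T1 T2 HD]]]]]]].
  have [f0 [M' [N' [-> -> -> {}T1 {}T2]]]] := renN_reflects_bcast HdM HdN RM RN T1 T2.
  by exists (LAct p (AOut f0 v)), (NPar M' D N'); split=> //; apply: nt_bcastL T1 T2 HD.
- move=> [X1 [X2 [p [q [f [v [-> -> T2 T1 HD]]]]]]].
  have [f0 [N' [M' [-> -> -> {}T2 {}T1]]]] := renN_reflects_bcast HdN HdM RN RM T2 T1.
  by exists (LAct p (AOut f0 v)), (NPar M' D N'); split=> //; apply: nt_bcastR T2 T1 HD.
- move=> [X1 -> /RM [l [M' [-> -> T]]]].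
  by exists l, (NPar M' D N); split=> //; apply: nt_parL.
- move=> [X2 -> /RN [l [N' [-> -> T]]]].
  by exists l, (NPar M D N'); split=> //; apply: nt_parR.
Qed.

Lemma ntrans_renN_inv c d M :
  renokN Dl c M -> ~ occN Dl d M -> renN_reflects c d M.
Proof.
elim: M => [V E Phi|M IH e|M IH D N IH'] /= Hc Hd.
- exact: renN_reflects_base.
- case: (e =P c) => [<-|ec]; first exact: renN_reflects_bound.
  have ed : e <> d by move=> ed; apply: Hd; left; rewrite ed.
  apply: renN_reflects_res => //; apply: IH => [|H]; last by apply: Hd; right.
  by case: Hc => // /ec.
- case: Hc => HcM HcN.
  have HdM : ~ occN Dl d M by move=> H; apply: Hd; left.
  have HdN : ~ occN Dl d N by move=> H; apply: Hd; right.
  exact: renN_reflects_par (IH HcM HdM) (IH' HcN HdN).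
Qed.

End NetworkTransitions.

Section Simulation.

Variable Dl : defs.
Hypothesis Dl_ok : defs_ok Dl.

Definition nsim M N := forall l M', ntrans Dl M l M' ->
  exists N', ntrans Dl N l N' /\ ncong Dl M' N'.

Lemma nsim_refl M : nsim M M.
Proof. by move=> l M' T; exists M'; split=> //; apply: nc_refl. Qed.

Lemma nsim_trans M N O : nsim M N -> nsim N O -> nsim M O.
Proof.
move=> HMN HNO l M' /HMN [N' [/HNO [O' [T C2]] C1]].
by exists O'; split=> //; apply: nc_trans C2.
Qed.

Lemma nsim_res M N c : nsim M N -> nsim (NRes M c) (NRes N c).
Proof.
move=> H l X /ntrans_res_inv [[M' [p [v [-> -> /H [N' [T C]]]]]]|[M' [-> /H [N' [T C]] Hl]]].
- by exists (NRes N' c); split; [apply: nt_res1 T | apply: nc_res].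
- by exists (NRes N' c); split; [apply: nt_res2 T Hl | apply: nc_res].
Qed.

Lemma nsim_par M M' D N N' : ncong Dl M M' -> ncong Dl N N' ->
  nsim M M' -> nsim N N' -> nsim (NPar M D N) (NPar M' D N').
Proof.
move=> CM CN HM HN l X /ntrans_par_inv [].
- move=> [X1 [X2 [p [q [f [v [-> -> /HM [Y1 [T1 C1]] /HN [Y2 [T2 C2]] HD]]]]]]].
  by exists (NPar Y1 D Y2); split; [apply: nt_bcastL T1 T2 HD | apply: nc_par].
- move=> [X1 [X2 [p [q [f [v [-> -> /HN [Y2 [T2 C2]] /HM [Y1 [T1 C1]] HD]]]]]]].
  by exists (NPar Y1 D Y2); split; [apply: nt_bcastR T2 T1 HD | apply: nc_par].
- move=> [X1 -> /HM [Y1 [T1 C1]]].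
  by exists (NPar Y1 D N'); split; [apply: nt_parL | apply: nc_par].
- move=> [X2 -> /HN [Y2 [T2 C2]]].
  by exists (NPar M' D Y2); split; [apply: nt_parR | apply: nc_par].
Qed.

Lemma nsim_base V E Phi Psi : (forall p, p \in V -> pcong Dl (Phi p) (Psi p)) ->
  nsim (NBase V E Phi) (NBase V E Psi).
Proof.
move=> H l X /ntrans_base_inv [p [a [P' [-> -> Hp T]]]].
have [Q' T' C] := (pcong_psim Dl_ok (H p Hp)).1 _ _ T.
exists (NBase V E (upd Psi p Q')); split; first exact: ntrans_base.
by apply: nc_base => q Hq; rewrite /upd; case: eqP => _ //; apply: H.
Qed.

Lemma ntrans_nc_alpha M c d l M' : ~ occN Dl d M -> renokN Dl c M ->
  ntrans Dl M l M' -> ncong Dl (NRes M' c) (NRes (renN c d M') d).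
Proof. by move=> Hd Hc T; apply: nc_alpha (ntrans_renokN T Hc) => /(ntrans_occN T). Qed.

Lemma nsim_alpha M c d : ~ occN Dl d M -> renokN Dl c M ->
  nsim (NRes M c) (NRes (renN c d M) d).
Proof.
move=> Hd Hc l X /ntrans_res_inv [[M' [p [v [-> -> T]]]]|[M' [-> T Hl]]];
  exists (NRes (renN c d M') d); split; try exact: ntrans_nc_alpha Hd Hc T.
- by have := ntrans_renN Hc Hd T; rewrite /= /renC eqxx; apply: nt_res1.
- have := ntrans_renN Hc Hd T; rewrite renL_id // => T'.
  exact: nt_res2 T' (ntrans_nocc_lab Hd T).
Qed.

Lemma nsim_alpha_sym M c d : ~ occN Dl d M -> renokN Dl c M ->
  nsim (NRes (renN c d M) d) (NRes M c).
Proof.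
move=> Hd Hc l X /ntrans_res_inv [[X0 [p [v [-> -> T]]]]|[X0 [-> T Hl]]];
  have [l0 [M0 [El -> T0]]] := ntrans_renN_inv Hc Hd T;
  exists (NRes M0 c); split; try exact/nc_sym/(ntrans_nc_alpha Hd Hc T0).
- have E := renL_out_fresh (ntrans_nocc_lab Hd T0) El.
  by rewrite E in T0; apply: nt_res1 T0.
- have Hl0 : ~~ chan_in_lab c l0 by apply: contra Hl; rewrite El; apply: chan_in_renL.
  by rewrite El renL_id //; apply: nt_res2 T0 Hl0.
Qed.

Lemma nsim_swap M c d : nsim (NRes (NRes M c) d) (NRes (NRes M d) c).
Proof.
move=> l X T; case: (c =P d) => [cd|cd]; first by subst; exists X; split=> //; apply: nc_refl.
case/ntrans_res_inv: T => [[X0 [p [v [-> -> T1]]]]|[X0 [-> T1 Hl]]].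
- case/ntrans_res_inv: T1 => [[? [? [? [? _ _]]]] //|[M' [-> T2 Hl2]]].
  exists (NRes (NRes M' d) c); split; last exact: nc_swap.
  by apply: nt_res2 => //; apply: nt_res1 T2.
- case/ntrans_res_inv: T1 => [[M' [p [v [-> -> T2]]]]|[M' [-> T2 Hl2]]];
    exists (NRes (NRes M' d) c); (split; last exact: nc_swap).
  + by apply: nt_res1; apply: nt_res2 T2 _; apply/eqP.
  + exact: nt_res2 (nt_res2 T2 Hl) Hl2.
Qed.

Lemma nsim_comm M D N : nsim (NPar M D N) (NPar N D M).
Proof.
move=> l X /ntrans_par_inv [].
- move=> [X1 [X2 [p [q [f [v [-> -> T1 T2 HD]]]]]]].
  by exists (NPar X2 D X1); split; [apply: nt_bcastR T1 T2 HD | apply: nc_comm].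
- move=> [X1 [X2 [p [q [f [v [-> -> T2 T1 HD]]]]]]].
  by exists (NPar X2 D X1); split; [apply: nt_bcastL T2 T1 HD | apply: nc_comm].
- by move=> [X1 -> T1]; exists (NPar N D X1); split; [apply: nt_parR | apply: nc_comm].
- by move=> [X2 -> T2]; exists (NPar X2 D M); split; [apply: nt_parL | apply: nc_comm].
Qed.

Lemma ntrans_nfc_chan M c p a M' :
  ~ fcN Dl c M -> ntrans Dl M (LAct p a) M' -> act_chan a <> c.
Proof. by move=> H T E; apply/H/(ntrans_chan_fcN T); rewrite /= E. Qed.

Lemma nsim_extr M D N c : ~ fcN Dl c M ->
  nsim (NRes (NPar M D N) c) (NPar M D (NRes N c)).
Proof.
move=> Hc l X /ntrans_res_inv [[X0 [p [v [-> -> T]]]]|[X0 [-> T Hl]]].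
- case/ntrans_par_inv: T => [[X1 [X2 [p' [q [f [v' [[_ <- _] _ T1 _ _]]]]]]]
                            |[X1 [X2 [p' [q [f [v' [[_ <- _] _ _ T1 _]]]]]]]
                            |[X1 _ T1]|[X2 -> T2]].
  1-3: by case: (ntrans_nfc_chan Hc T1).
  by exists (NPar M D (NRes X2 c)); split; [apply/nt_parR; apply: nt_res1 T2 | apply: nc_extr].
  case/ntrans_par_inv: T => [[X1 [X2 [p [q [f [v [El -> T1 T2 HD]]]]]]]
                            |[X1 [X2 [p [q [f [v [El -> T2 T1 HD]]]]]]]
                            |[X1 -> T1]|[X2 -> T2]]; subst.
  + exists (NPar X1 D (NRes X2 c)); split; last exact: nc_extr (ntrans_nfcN Hc T1).
    by apply: nt_bcastL T1 (nt_res2 T2 _) HD.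
  + exists (NPar X1 D (NRes X2 c)); split; last exact: nc_extr (ntrans_nfcN Hc T1).
    exact: nt_bcastR (nt_res2 T2 Hl) T1 HD.
  + exists (NPar X1 D (NRes N c)); split; last exact: nc_extr (ntrans_nfcN Hc T1).
    exact: nt_parL.
  + exists (NPar M D (NRes X2 c)); split; last exact: nc_extr.
    exact: nt_parR (nt_res2 T2 Hl).
Qed.

Lemma nsim_extr_sym M D N c : ~ fcN Dl c M ->
  nsim (NPar M D (NRes N c)) (NRes (NPar M D N) c).
Proof.
move=> Hc l X /ntrans_par_inv [].
- move=> [X1 [X2 [p [q [f [v [-> -> T1 /ntrans_res_inv T2 HD]]]]]]].
  case: T2 => [[? [? [? [? _ _]]]] //|[N' [-> T2 Hl]]].
  exists (NRes (NPar X1 D N') c); split; last exact/nc_sym/nc_extr/(ntrans_nfcN Hc T1).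
  by apply: nt_res2 (nt_bcastL T1 T2 HD) _; apply/eqP/(ntrans_nfc_chan Hc T1).
- move=> [X1 [X2 [p [q [f [v [-> -> /ntrans_res_inv T2 T1 HD]]]]]]].
  case: T2 => [[? [? [? [? _ _]]]] //|[N' [-> T2 Hl]]].
  exists (NRes (NPar X1 D N') c); split; last exact/nc_sym/nc_extr/(ntrans_nfcN Hc T1).
  exact: nt_res2 (nt_bcastR T2 T1 HD) Hl.
- move=> [X1 -> T1].
  exists (NRes (NPar X1 D N) c); split; last exact/nc_sym/nc_extr/(ntrans_nfcN Hc T1).
  apply: nt_res2 (nt_parL _ _ T1) _.
  by case: l T1 => //= p a /(ntrans_nfc_chan Hc) /eqP.
- move=> [X2 -> /ntrans_res_inv [[N' [p [v [-> -> T2]]]]|[N' [-> T2 Hl]]]];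
    exists (NRes (NPar M D N') c); (split; last exact/nc_sym/nc_extr).
  + by apply: nt_res1; apply: nt_parR T2.
  + exact: nt_res2 (nt_parR _ _ T2) Hl.
Qed.

Lemma ncong_nsim M N : ncong Dl M N -> nsim M N /\ nsim N M.
Proof.
elim=> {M N}.
- by move=> M; split; apply: nsim_refl.
- by move=> M N _ [].
- by move=> M N O _ [H1 H2] _ [H3 H4]; split; apply: nsim_trans; eassumption.
- by move=> M N c _ [H1 H2]; split; apply: nsim_res.
- by move=> M M' D N N' C1 [H1 H2] C2 [H3 H4]; split; apply: nsim_par => //; apply: nc_sym.
- move=> V E Phi Psi H; split; apply: nsim_base => p Hp; last apply: pc_sym; exact: H.
- by move=> M c d Hd Hc; split; [apply: nsim_alpha | apply: nsim_alpha_sym].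
- by move=> M c d; split; apply: nsim_swap.
- by move=> M D N; split; apply: nsim_comm.
- by move=> M D N c Hc; split; [apply: nsim_extr | apply: nsim_extr_sym].
Qed.

End Simulation.

Theorem lemma3 (Dl : defs) (M M' N : net) (l : lab) :
  defs_ok Dl -> wf M -> wf M' -> wf N ->
  ntrans Dl M l M' -> ncong Dl M N ->
  exists N', ntrans Dl N l N' /\ ncong Dl M' N'.
Proof. by move=> Dl_ok _ _ _ T /(ncong_nsim Dl_ok) [sim_MN _]; apply: sim_MN T. Qed.
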